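(* Let $P\in\mathbb{R}[x]$ have degree $n\ge 2$, and let $r_1,\dots,r_m\in\mathbb{C}$ be its distinct complex roots with multiplicities $\mu_1\ge\mu_2\ge\cdots\ge\mu_m\ge1$, so that $\operatorname{mult}(P)=\boldsymbol\mu=(\mu_1,\dots,\mu_m)$. Let $\bar{\boldsymbol\mu}=(\bar\mu_1,\dots,\bar\mu_n)$ be the conjugate of $\boldsymbol\mu$, i.e. $\bar\mu_i=\#\{j\in\{1,\dots,m\}:\mu_j\ge i\}$. For $1\le i\le n$ let $G_i=\gcd(P^{(0)},P^{(1)},\dots,P^{(i)})$, where $P^{(k)}$ denotes the $k$-th derivative of $P$ with respect to $x$. Then for every $1\le i\le n$, $$R_{(\bar\mu_1,\dots,\bar\mu_i)}\big(P^{(0)},P^{(1)},\dots,P^{(i)}\big)=c_i\prod_{k:\ \mu_k>i}(x-r_k)^{\mu_k-i}$$ for some nonzero constant $c_i$; in particular $R_{(\bar\mu_1,\dots,\bar\mu_i)}(P^{(0)},\dots,P^{(i)})$ equals $G_i$ up to a nonzero constant factor. (In other words, the incremental gcd $(G_1,\dots,G_n)$ of $(P^{(0)},\dots,P^{(n)})$ is, up to nonzero constant factors, $\big(R_{(\bar\mu_1)},R_{(\bar\mu_1,\bar\mu_2)},\dots,R_{(\bar\mu_1,\dots,\bar\mu_n)}\big)$.)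
   Context: Subresultants of several polynomials. Let $\boldsymbol F=(F_0,F_1,\dots,F_t)$ be polynomials in $x$ with $d_i=\deg F_i$ and $F_i=\sum_{j=0}^{d_i}a_{ij}x^j$, $a_{0d_0}\neq0$. For $\boldsymbol\delta=(\delta_1,\dots,\delta_t)\in\mathbb{Z}_{\ge0}^t$ with $|\boldsymbol\delta|:=\delta_1+\cdots+\delta_t\le d_0$, put $\delta_0=\max_{1\le i\le t,\ \delta_i\neq0}(d_i+\delta_i)-d_0$ if this maximum is $\ge d_0$, and $\delta_0=1$ otherwise. The generalized Sylvester matrix $\boldsymbol M_{\boldsymbol\delta}(\boldsymbol F)$ is the $(\delta_0+|\boldsymbol\delta|)\times(\delta_0+d_0)$ matrix whose rows are, in this order, the coefficient vectors of $x^{\delta_0-1}F_0,\dots,x^0F_0,\ x^{\delta_1-1}F_1,\dots,x^0F_1,\ \dots,\ x^{\delta_t-1}F_t,\dots,x^0F_t$ with respect to the monomials $x^{\delta_0+d_0-1},\dots,x,1$ (a polynomial $F_i$ with $\delta_i=0$ contributes no rows). For a $p\times q$ matrix $\boldsymbol M$ with $p\le q$ and columns $\boldsymbol M_1,\dots,\boldsymbol M_q$, its determinant polynomial is $\operatorname{dp}\boldsymbol M=\sum_{i=0}^{q-p}\det[\boldsymbol M_1,\dots,\boldsymbol M_{p-1},\boldsymbol M_{q-i}]\,x^i$. The $\boldsymbol\delta$-th subresultant is $R_{\boldsymbol\delta}(\boldsymbol F)=\operatorname{dp}\boldsymbol M_{\boldsymbol\delta}(\boldsymbol F)$. *)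

From HB Require Import structures.
From mathcomp Require Import all_boot all_order all_algebra.
From mathcomp Require Export complex.
Set Implicit Arguments. Unset Strict Implicit. Unset Printing Implicit Defensive.
Import Order.TTheory GRing.Theory Num.Theory.
Local Open Scope ring_scope.

Section Subres.
Variable R : comNzRingType.

Definition pdeg (p : {poly R}) : nat := (size p).-1.

Definition mxentry p q (M : 'M[R]_(p, q)) (a : 'I_p) (j : nat) : R :=
  if insub j is Some j' then M a j' else 0.

(* determinant polynomial of a p x q matrix (p <= q):
   dp M = sum_{i=0}^{q-p} det[M_1, ..., M_{p-1}, M_{q-i}] x^i
   (columns 1-indexed in the paper, 0-indexed here). *)
Definition detpoly p q (M : 'M[R]_(p, q)) : {poly R} :=
  \sum_(i < (q - p).+1)
     \det (\matrix_(a < p, b < p)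
             mxentry M a (if (b.+1 < p)%N then (b : nat) else (q - 1 - i)%N)) *: 'X^i.

(* delta_0 for F = F_0 :: Fs and delta = (delta_1, ..., delta_t) *)
Definition delta0 (F : seq {poly R}) (dl : seq nat) : nat :=
  let d0 := pdeg (head (0 : {poly R}) F) in
  let vals := map (fun fd : {poly R} * nat => (pdeg fd.1 + fd.2)%N)
                  (filter (fun fd : {poly R} * nat => fd.2 != 0%N) (zip (behead F) dl)) in
  let mx := foldr maxn 0%N vals in
  if (vals != [::]) && (d0 <= mx)%N then (mx - d0)%N else 1%N.

Definition sylv_ncols (F : seq {poly R}) (dl : seq nat) : nat :=
  addn (delta0 F dl) (pdeg (head (0 : {poly R}) F)).

Definition sylv_rows (F : seq {poly R}) (dl : seq nat) : seq {poly R} :=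
  flatten [seq [seq 'X^e * fd.1 | e <- rev (iota 0 fd.2)]
          | fd <- zip F (delta0 F dl :: dl)].

(* generalized Sylvester matrix M_delta(F): row a is the coefficient vector of
   the a-th row polynomial w.r.t. x^{q-1}, ..., x, 1 *)
Definition gsylv (F : seq {poly R}) (dl : seq nat) :
  'M[R]_(size (sylv_rows F dl), sylv_ncols F dl) :=
  \matrix_(a < size (sylv_rows F dl), j < sylv_ncols F dl)
     (nth 0 (sylv_rows F dl) a)`_(sylv_ncols F dl - 1 - j).

Definition subres (F : seq {poly R}) (dl : seq nat) : {poly R} :=
  detpoly (gsylv F dl).

End Subres.

Definition mubar m (mu : 'I_m -> nat) (i : nat) : nat := #|[set j | (i <= mu j)%N]|.

(* Over C write P = c * prod_j (x - r_j)^mu_j and G_i = prod_(mu_j > i)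
   (x - r_j)^(mu_j - i), a common divisor of P, P', ..., P^(i).  Expanding dp
   along its last column writes R_delta as a combination of the rows
   x^e P^(k) of the Sylvester matrix, so every common divisor of
   P, ..., P^(i) divides it.  The coefficient of x^(deg G_i) in R_delta is
   the leading maximal minor, which is nonzero because the rows are linearly
   independent: in a relation among the blocks of P, ..., P^(k) the last
   block contributes A P^(k) with deg A < mubar_k, which must be divisible by
   G_(k-1); then A vanishes at the mubar_k roots with mu_j >= k, so A = 0.
   As deg R_delta <= deg G_i, R_delta and G_i are associate, hence also
   associate to gcd(P, ..., P^(i)); the statement over R follows since
   subresultants and gcds commute with the embedding R -> C. *)

From mathcomp Require Import all_boot all_order all_algebra.
From mathcomp Require Import complex zify.
Set Implicit Arguments. Unset Strict Implicit. Unset Printing Implicit Defensive.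
Import GRing.Theory Num.Theory.
Local Open Scope ring_scope.

Section DetPoly.
Variables (R : comNzRingType) (p q : nat) (M : 'M[R]_(p, q)).

Definition dpmx (c : nat) : 'M[R]_p :=
  \matrix_(a < p, b < p) mxentry M a (if (b.+1 < p)%N then (b : nat) else c).

Definition row_poly (a : 'I_p) : {poly R} := \poly_(k < q) mxentry M a (q - 1 - k).

Lemma detpolyE : detpoly M = \poly_(k < (q - p).+1) \det (dpmx (q - 1 - k)).
Proof. by rewrite poly_def. Qed.

Lemma size_detpoly : (size (detpoly M) <= (q - p).+1)%N.
Proof. by rewrite detpolyE size_poly. Qed.

Lemma coef_detpoly_top : (p <= q)%N -> (detpoly M)`_(q - p) = \det (dpmx p.-1).
Proof. by move=> hpq; rewrite detpolyE coef_poly ltnSn; congr (\det (dpmx _)); lia. Qed.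

Section LastColumn.
Variable l : 'I_p.
Hypothesis l_last : l.+1 = p.

Lemma det_dpmx_expand c :
  \det (dpmx c) = \sum_a mxentry M a c * cofactor (dpmx 0) a l.
Proof.
rewrite (expand_det_col _ l); apply: eq_bigr => a _.
rewrite mxE l_last ltnn; congr (_ * (_ * \det _)).
apply/matrixP => x y; rewrite !mxE.
suff -> : ((lift l y : nat).+1 < p)%N by [].
rewrite /= /bump; have := ltn_ord y; case: (leqP l y) => /= h; lia.
Qed.

Lemma det_dpmx_repeat c : (c.+1 < p)%N -> \det (dpmx c) = 0.
Proof.
move=> hc; have cp : (c < p)%N by lia.
rewrite -det_tr; apply: (@determinant_alternate _ _ _ l (Ordinal cp)).
  by apply/eqP => /(congr1 val) /=; lia.
by move=> x; rewrite !mxE l_last ltnn /= hc.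
Qed.

End LastColumn.

(* Laplace expansion along the last column, done simultaneously for all the
   coefficients of [detpoly M]. *)
Lemma detpoly_row_comb : (0 < p <= q)%N ->
  exists c : 'I_p -> R, detpoly M = \sum_a c a *: row_poly a.
Proof.
move=> /andP[p_gt0 hpq]; have lp : (p.-1 < p)%N by rewrite prednK.
have l_last : (Ordinal lp).+1 = p by rewrite /= prednK.
exists (fun a => cofactor (dpmx 0) a (Ordinal lp)); apply/polyP => k.
rewrite detpolyE coef_poly coef_sum.
case: (ltnP k q) => hkq; last first.
  rewrite ifN; last by rewrite -leqNgt; lia.
  by rewrite big1 // => a _; rewrite coefZ coef_poly ltnNge hkq mulr0.
under eq_bigr do rewrite coefZ coef_poly hkq mulrC.
rewrite -(det_dpmx_expand l_last); case: ifP => // hk.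
by rewrite (det_dpmx_repeat l_last) //; lia.
Qed.

Lemma size_row_comb_ker (v : 'rV[R]_p) : (p <= q)%N -> v *m dpmx p.-1 = 0 ->
  (size (\sum_a v ord0 a *: row_poly a)%R <= q - p)%N.
Proof.
move=> hpq hv; apply/leq_sizeP => k hk.
rewrite coef_sum; case: (ltnP k q) => hkq; last first.
  by rewrite big1 // => a _; rewrite coefZ coef_poly ltnNge hkq mulr0.
have hc : (q - 1 - k < p)%N by lia.
transitivity ((v *m dpmx p.-1) 0 (Ordinal hc)); last by rewrite hv mxE.
rewrite mxE; apply: eq_bigr => a _; rewrite coefZ coef_poly hkq !mxE /=.
by case: ifP => // h; congr (_ * mxentry _ _ _); lia.
Qed.

End DetPoly.

Lemma detpoly_cast (R : comNzRingType) p1 p2 q (M1 : 'M[R]_(p1, q)) (M2 : 'M[R]_(p2, q))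
    (e : p1 = p2) :
  (forall a j, M1 a j = M2 (cast_ord e a) j) -> detpoly M1 = detpoly M2.
Proof.
by case: p2 / e M2 => M2 hM; congr detpoly; apply/matrixP => a j; rewrite hM cast_ord_id.
Qed.

Section PolyRows.
Variable R : comNzRingType.

Definition coefmx q (s : seq {poly R}) : 'M[R]_(size s, q) :=
  \matrix_(a < size s, j < q) s`_a`_(q - 1 - j).

Lemma subresE (F : seq {poly R}) dl :
  subres F dl = detpoly (coefmx (sylv_ncols F dl) (sylv_rows F dl)).
Proof. by []. Qed.

Lemma row_poly_coefmx q s a : all (fun f : {poly R} => size f <= q)%N s ->
  row_poly (coefmx q s) a = s`_a.
Proof.
move=> hs; apply/polyP => k; rewrite coef_poly; case: ltnP => hk.
  have hk' : (q - 1 - k < q)%N by lia.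
  by rewrite /mxentry (insubT (fun j => j < q)%N hk') mxE /=; congr (_`_ _); lia.
rewrite nth_default //; apply: leq_trans hk.
exact: (allP hs) _ (mem_nth 0 (ltn_ord a)).
Qed.

Definition shift_block (f : {poly R}) (d : nat) := [seq 'X^e * f | e <- rev (iota 0 d)].

Lemma sylv_rowsE (F : seq {poly R}) dl :
  sylv_rows F dl = flatten [seq shift_block fd.1 fd.2 | fd <- zip F (delta0 F dl :: dl)].
Proof. by []. Qed.

Lemma size_shift_block f d : size (shift_block f d) = d.
Proof. by rewrite size_map size_rev size_iota. Qed.

Lemma nth_shift_block f d b : (b < d)%N -> (shift_block f d)`_b = 'X^(d - 1 - b) * f.
Proof.
move=> hb; rewrite (nth_map 0%N) ?size_rev ?size_iota // nth_rev ?size_iota //.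
by rewrite nth_iota ?add0n; [congr ('X^_ * _); lia | lia].
Qed.

End PolyRows.

Section DivisorOfRows.
Variable K : idomainType.

Lemma dvdp_comb (I : finType) (D : {poly K}) (c : I -> K) (F : I -> {poly K}) :
  (forall i, D %| F i) -> D %| \sum_i c i *: F i.
Proof.
move=> hF; apply: (big_ind (fun f => D %| f)) => [|f g|i _]; first exact: dvdp0.
  exact: dvdp_add.
by rewrite -mul_polyC dvdp_mull.
Qed.

Lemma dvdp_detpoly_coefmx q s D : (0 < size s <= q)%N ->
  all (fun f : {poly K} => size f <= q)%N s -> all (dvdp D) s ->
  D %| detpoly (coefmx q s).
Proof.
move=> hsq hs hD; have [c ->] := detpoly_row_comb (coefmx q s) hsq.
apply: dvdp_comb => a; rewrite row_poly_coefmx //.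
exact: (allP hD) _ (mem_nth 0 (ltn_ord a)).
Qed.

End DivisorOfRows.

Section FreeRows.
Variable K : fieldType.

Definition free_polys (s : seq {poly K}) := forall v : nat -> K,
  \sum_(a < size s) v a *: s`_a = 0 -> forall a, (a < size s)%N -> v a = 0.

(* If the leading minor vanished, a nontrivial combination of the rows would
   have degree < deg D while being divisible by D. *)
Lemma detpoly_coefmx_eqp q s D : (0 < size s <= q)%N ->
  all (fun f : {poly K} => size f <= q)%N s -> free_polys s -> all (dvdp D) s ->
  size D = (q - size s).+1 -> detpoly (coefmx q s) %= D.
Proof.
move=> hsq hs hfree hD szD; have hpq : (size s <= q)%N by case/andP: hsq.
have D_dvd := dvdp_detpoly_coefmx hsq hs hD.
have top_neq0 : (detpoly (coefmx q s))`_(q - size s) != 0.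
  rewrite coef_detpoly_top //; apply/negP => /det0P [v v_neq0 hv].
  have hsz := size_row_comb_ker hpq hv.
  have rowsE : \sum_a v ord0 a *: row_poly (coefmx q s) a = \sum_a v ord0 a *: s`_a.
    by apply: eq_bigr => a _; rewrite row_poly_coefmx.
  rewrite rowsE in hsz.
  have comb0 : \sum_a v ord0 a *: s`_a = 0.
    apply/eqP; apply: contraTT hsz => hS; rewrite -ltnNge -szD.
    apply: dvdp_leq hS (dvdp_comb _ _) => a.
    exact: (allP hD) _ (mem_nth 0 (ltn_ord a)).
  pose w k := if (insub k : option 'I_(size s)) is Some a then v ord0 a else 0.
  move/eqP: v_neq0; apply; apply/rowP => b.
  rewrite mxE; have w_sum : \sum_(a < size s) w a *: s`_a = 0.
    by rewrite -[RHS]comb0; apply: eq_bigr => a _; rewrite /w valK.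
  by have := hfree w w_sum b (ltn_ord b); rewrite /w valK.
rewrite eqp_sym -dvdp_size_eqp // szD eqn_leq size_detpoly /= ltnNge andbT.
by apply: contra top_neq0 => hsz; rewrite nth_default.
Qed.

Lemma free_cat_shift_block s f d (D : {poly K}) :
  free_polys s -> all (dvdp D) s ->
  (forall A : {poly K}, (size A <= d)%N -> D %| A * f -> A = 0) ->
  free_polys (s ++ shift_block f d).
Proof.
move=> hs hD hA v; rewrite size_cat size_shift_block big_split_ord /=.
set S := (X in X + _ = 0); set A := \sum_(b < d) v (size s + b)%N *: 'X^(d - 1 - b).
have -> : \sum_(b < d) v (rshift (size s) b) *: (s ++ shift_block f d)`_(rshift (size s) b)
    = A * f.
  rewrite /A mulr_suml; apply: eq_bigr => b _.
  by rewrite /= nth_cat ltnNge leq_addr /= addKn nth_shift_block // scalerAl.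
move=> hsum; have D_S : D %| S.
  apply: dvdp_comb => a; rewrite /= nth_cat ltn_ord.
  exact: (allP hD) _ (mem_nth 0 (ltn_ord a)).
have A0 : A = 0.
  apply: hA.
    apply/leq_sizeP => j hj; rewrite /A coef_sumMXn big1 // => b /eqP.
    by have := ltn_ord b; lia.
  by move/eqP: hsum; rewrite addrC addr_eq0 => /eqP ->; rewrite dvdpNr.
move=> a; case: (ltnP a (size s)) => has ha.
  apply: (hs v _ a has); move: hsum; rewrite A0 mul0r addr0 => hS; rewrite -[RHS]hS.
  by apply: eq_bigr => i _; rewrite /= nth_cat ltn_ord.
have hb : (a - size s < d)%N by lia.
have := congr1 (fun g : {poly K} => g`_(d - 1 - (a - size s))) A0.
rewrite coef0 /A coef_sumMXn (big_pred1 (Ordinal hb)) /= ?subnKC // => i /=.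
apply/eqP/eqP => [h|->//]; apply: val_inj => /=; have := ltn_ord i; lia.
Qed.

End FreeRows.

Section ProdXsubC.
Variables (K : idomainType) (J : finType) (Pj : pred J) (a : J -> K) (e : J -> nat).

Lemma size_prod_XsubC_exp :
  size (\prod_(j | Pj j) ('X - (a j)%:P) ^+ e j) = (\sum_(j | Pj j) e j).+1.
Proof.
elim/big_rec2: _ => [|j n f _ hf]; first by rewrite size_poly1.
have f_neq0 : f != 0 by rewrite -size_poly_gt0 hf.
by rewrite size_monicM ?monic_exp ?monicXsubC // size_exp_XsubC hf addSn addnS.
Qed.

Lemma prod_XsubC_exp_dvdp (g : {poly K}) : injective a ->
  (forall j, Pj j -> ('X - (a j)%:P) ^+ e j %| g) ->
  \prod_(j | Pj j) ('X - (a j)%:P) ^+ e j %| g.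
Proof.
move=> a_inj hg; have := index_enum_uniq J.
elim: (index_enum J) => [|x s IH] /=; first by rewrite big_nil dvd1p.
case/andP => x_notin_s s_uniq; rewrite big_cons; case: ifP => Px; last exact: IH.
rewrite Gauss_dvdp ?hg ?IH //.
apply: coprimep_expl; rewrite coprimep_sym coprimep_XsubC rootE horner_prod.
rewrite prodf_seq_neq0; apply/allP => j js; apply/implyP => _.
rewrite horner_exp hornerXsubC expf_neq0 // subr_eq0; apply/eqP => /a_inj ejx.
by move: x_notin_s; rewrite ejx js.
Qed.

End ProdXsubC.

Section Char0Deriv.
Variable K : numDomainType.

Lemma size_deriv_char0 (p : {poly K}) : size p^`() = (size p).-1.
Proof.
have [lep1|lt1p] := leqP (size p) 1.
  by rewrite {1}[p]size1_polyC // derivC size_poly0; lia.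
rewrite size_poly_eq // mulrn_eq0 -subn2 -subSn // subn2.
by rewrite lead_coef_eq0 -size_poly_eq0 -(subnKC lt1p).
Qed.

Lemma size_derivn_char0 (p : {poly K}) n : size p^`(n) = (size p - n)%N.
Proof.
elim: n => [|n IH]; first by rewrite derivn0 subn0.
by rewrite derivnS size_deriv_char0 IH -subnS.
Qed.

End Char0Deriv.

Section ConjugatePartition.
Variables (m : nat) (mu : 'I_m -> nat).

Lemma mubar_le k : (mubar mu k <= m)%N.
Proof. by rewrite /mubar (leq_trans (max_card _)) ?card_ord. Qed.

Lemma mubar1 : (forall j, 0 < mu j)%N -> mubar mu 1 = m.
Proof.
move=> mu_gt0; rewrite /mubar (_ : [set j | _] = setT) ?cardsT ?card_ord //.
by apply/setP => j; rewrite !inE mu_gt0.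
Qed.

Lemma mubarE k : mubar mu k = (\sum_j (k <= mu j) : nat)%N.
Proof.
rewrite /mubar -sum1_card big_mkcond /=; apply: eq_bigr => j _.
by rewrite inE; case: (k <= mu j)%N.
Qed.

Lemma sum_mubar_iota i :
  (\sum_(k <- iota 1 i) mubar mu k + \sum_j (mu j - i) = \sum_j mu j)%N.
Proof.
elim: i => [|i IH]; first by rewrite big_nil add0n; apply: eq_bigr => j _; rewrite subn0.
rewrite -[X in iota _ X]addn1 iotaD big_cat big_seq1 /= -addnA add1n -IH; congr (_ + _)%N.
rewrite mubarE -big_split /=; apply: eq_bigr => j _.
by case: (leqP i.+1 (mu j)) => h /=; lia.
Qed.

End ConjugatePartition.

Lemma foldr_maxn_leq (s : seq nat) b : all (fun x => x <= b)%N s -> (foldr maxn 0 s <= b)%N.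
Proof. by elim: s => //= x s IH /andP[hx hs]; rewrite geq_max hx IH. Qed.

Lemma big_gcdp_dvdp (K : idomainType) n (G : nat -> {poly K}) k :
  (k < n)%N -> \big[@gcdp K/0]_(j < n) G j %| G k.
Proof.
elim: n G k => [|n IH] G [|k] //= hk; rewrite big_ord_recl /=; first exact: dvdp_gcdl.
apply: dvdp_trans (dvdp_gcdr _ _) _.
exact: (IH (fun j => G j.+1)).
Qed.

Lemma dvdp_big_gcdp (K : idomainType) n (G : nat -> {poly K}) D :
  (forall k, (k < n)%N -> D %| G k) -> D %| \big[@gcdp K/0]_(j < n) G j.
Proof.
move=> hG; apply: (big_ind (fun g => D %| g)) => [|f g|j _]; first exact: dvdp0.
  by move=> Df Dg; rewrite dvdp_gcd Df.
exact: hG.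
Qed.

Section DerivativeRows.
Variable K : numFieldType.
Variables (m : nat) (r : 'I_m -> K) (mu : 'I_m -> nat) (P : {poly K}).

Definition trunc_prod (t : nat) :=
  \prod_(j < m | (t < mu j)%N) ('X - (r j)%:P) ^+ (mu j - t).

Lemma size_trunc_prod t : size (trunc_prod t) = (\sum_j (mu j - t)).+1.
Proof.
rewrite size_prod_XsubC_exp big_mkcond /=; congr _.+1; apply: eq_bigr => j _.
by case: ltnP => // ?; apply/esym/eqP; rewrite subn_eq0.
Qed.

(* The block of [P^(k)] in the Sylvester matrix; for [k = 0] its size is
   [delta0 = m - 1] (see [delta0_derivs]). *)
Definition block_size k := if k == 0%N then m.-1 else mubar mu k.

Definition deriv_rows i :=
  flatten [seq shift_block P^`(k) (block_size k) | k <- iota 0 i.+1].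

Lemma deriv_rowsS i :
  deriv_rows i.+1 = deriv_rows i ++ shift_block P^`(i.+1) (mubar mu i.+1).
Proof. by rewrite /deriv_rows -addn1 iotaD map_cat flatten_cat /= cats0. Qed.

Lemma deriv_rows_dvdp D i : (forall k, (k <= i)%N -> D %| P^`(k)) ->
  all (dvdp D) (deriv_rows i).
Proof.
move=> hD; apply/allP => f /flattenP [s /mapP [k]].
rewrite mem_iota => /andP[_ hk] -> /mapP [e _ ->].
by apply: dvdp_mull; apply: hD; lia.
Qed.

Lemma size_deriv_rows i :
  size (deriv_rows i) = (m.-1 + \sum_(k <- iota 1 i) mubar mu k)%N.
Proof.
elim: i => [|i IH]; first by rewrite /deriv_rows /= cats0 size_shift_block big_nil addn0.
have -> : iota 1 i.+1 = iota 1 i ++ [:: i.+1] by rewrite -[i.+1]addn1 iotaD addnC.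
by rewrite deriv_rowsS size_cat size_shift_block IH big_cat big_seq1 addnA.
Qed.

Lemma deriv_rows_size_le i :
  all (fun f : {poly K} => size f <= m.-1 + (size P).-1)%N (deriv_rows i).
Proof.
apply/allP => f /flattenP [_ /mapP [k _ ->] /mapP [e]].
rewrite mem_rev mem_iota add0n => /andP[_ he] ->.
apply: leq_trans (size_polyMleq _ _) _; rewrite size_polyXn size_derivn_char0.
have := mubar_le mu k; move: he; rewrite /block_size -!subn1.
by move: (size P) (e : nat) => s {}e; case: k => [|k] /=; lia.
Qed.

Variable lc : K.
Hypothesis r_inj : injective r.
Hypothesis lc_neq0 : lc != 0.
Hypothesis P_factor : P = lc *: \prod_(j < m) ('X - (r j)%:P) ^+ mu j.
Hypothesis mu_gt0 : forall j, (0 < mu j)%N.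

Lemma size_factored_poly : size P = (\sum_j mu j).+1.
Proof. by rewrite P_factor size_scale // size_prod_XsubC_exp. Qed.

Lemma factored_poly_neq0 : P != 0.
Proof. by rewrite -size_poly_gt0 size_factored_poly. Qed.

Lemma nroots_gt0 : (2 <= size P)%N -> (0 < m)%N.
Proof.
rewrite lt0n; apply: contraTneq => m0.
by rewrite size_factored_poly big1 // => j; have := ltn_ord j; lia.
Qed.

Lemma derivn_XsubC_mult j k : (k <= mu j)%N ->
  exists Q, P^`(k) = ('X - (r j)%:P) ^+ (mu j - k) * Q /\ ~~ root Q (r j).
Proof.
elim: k => [_|k IH hk].
  exists (lc *: \prod_(j' < m | j' != j) ('X - (r j')%:P) ^+ mu j'); split.
    by rewrite derivn0 P_factor (bigD1 j) //= subn0 scalerAr.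
  rewrite rootE hornerZ horner_prod mulf_eq0 negb_or lc_neq0 /= prodf_seq_neq0.
  apply/allP => j' _; apply/implyP => hj.
  rewrite horner_exp hornerXsubC expf_neq0 // subr_eq0; apply/eqP => /r_inj ejj.
  by move: hj; rewrite ejj eqxx.
have [Q [PkE Q_r]] := IH (ltnW hk); set t := (mu j - k.+1)%N.
have tE : (mu j - k = t.+1)%N by rewrite /t; lia.
exists (Q *+ t.+1 + ('X - (r j)%:P) * Q^`()); split.
  rewrite derivnS PkE tE derivM deriv_exp derivXsubC mul1r /=.
  by rewrite mulrDr exprSr -mulrA mulrnAl mulrnAr.
rewrite rootE hornerD hornerMn hornerM hornerXsubC subrr mul0r addr0.
by rewrite mulrn_eq0 negb_or /= Q_r.
Qed.

Lemma trunc_prod_dvdp_derivn t k : (k <= t)%N -> trunc_prod t %| P^`(k).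
Proof.
move=> hkt; apply: prod_XsubC_exp_dvdp => // j hj.
have [Q [-> _]] := derivn_XsubC_mult (ltnW (leq_ltn_trans hkt hj)).
by apply: dvdp_mulr; apply: dvdp_exp2l; lia.
Qed.

(* [A] vanishes at the [mubar mu k] distinct roots [r j] with [k <= mu j]:
   there [P^(k)] has multiplicity exactly [mu j - k], one less than in
   [trunc_prod k.-1]. *)
Lemma mul_derivn_eq0 k (A : {poly K}) : (0 < k)%N -> (size A <= mubar mu k)%N ->
  trunc_prod k.-1 %| A * P^`(k) -> A = 0.
Proof.
move=> k_gt0 szA hdvd.
have A_root j : (k <= mu j)%N -> root A (r j).
  move=> hj; have [Q [PkE Q_r]] := derivn_XsubC_mult hj.
  have : ('X - (r j)%:P) ^+ (mu j - k).+1 %| A * P^`(k).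
    apply: dvdp_trans hdvd; rewrite /trunc_prod (bigD1 j) /=; last by lia.
    by rewrite (_ : mu j - k.-1 = (mu j - k).+1)%N ?dvdp_mulr //; lia.
  rewrite PkE exprSr mulrCA dvdp_mul2l ?expf_neq0 ?polyXsubC_eq0 //.
  by rewrite dvdp_XsubCl rootM (negbTE Q_r) orbF.
apply: (@roots_geq_poly_eq0 _ A [seq r j | j <- enum [set j | (k <= mu j)%N]]).
- by apply/allP => x /mapP [j]; rewrite mem_enum inE => /A_root + ->.
- by rewrite map_inj_uniq // enum_uniq.
- by rewrite size_map -cardE.
Qed.

Lemma free_deriv_rows i : free_polys (deriv_rows i).
Proof.
elim: i => [|i IH].
  rewrite /deriv_rows /= cats0 -[shift_block _ _]cat0s.
  apply: (free_cat_shift_block (D := 0)) => //.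
  by move=> A _; rewrite dvd0p mulf_eq0 (negbTE factored_poly_neq0) orbF => /eqP.
rewrite deriv_rowsS; apply: (free_cat_shift_block (D := trunc_prod i)) => //.
  by apply: deriv_rows_dvdp => k hk; apply: trunc_prod_dvdp_derivn.
by move=> A; apply: (mul_derivn_eq0 (k := i.+1)).
Qed.

Local Notation derivs i := [seq P^`(k) | k <- iota 0 i.+1].
Local Notation mubars i := [seq mubar mu k | k <- iota 1 i].

Lemma delta0_derivs i : (0 < i)%N -> (2 <= size P)%N -> delta0 (derivs i) (mubars i) = m.-1.
Proof.
case: i => // i _ szP; have m_pos := nroots_gt0 szP.
rewrite /delta0 /= zip_map filter_map /= mubar1 // -lt0n m_pos /=.
set M := foldr maxn 0 _.
have M_le : (M <= (pdeg P).-1 + m)%N.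
  apply: foldr_maxn_leq; rewrite !all_map; apply/allP => k.
  rewrite mem_filter mem_iota => /andP[_ /andP[k_ge1 _]] /=.
  rewrite /pdeg size_derivn_char0; have := mubar_le mu k.
  by move: (size P) (mubar mu k) (k : nat) k_ge1 => s b {}k; lia.
rewrite /pdeg size_deriv_char0 -/(pdeg P) (maxn_idPl M_le).
by rewrite /pdeg; move: (size P) szP m_pos => s; case: ifP; rewrite -!subn1; lia.
Qed.

Lemma sylv_rows_derivs i : (0 < i)%N -> (2 <= size P)%N ->
  sylv_rows (derivs i) (mubars i) = deriv_rows i.
Proof.
move=> i_gt0 szP; rewrite sylv_rowsE delta0_derivs // /deriv_rows /= zip_map.
congr (flatten (_ :: _)); rewrite -map_comp; apply/eq_in_map => k.
by rewrite mem_iota /block_size => /andP[k_ge1 _] /=; case: eqP k_ge1 => // ->.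
Qed.

Lemma sylv_ncols_derivs i : (0 < i)%N -> (2 <= size P)%N ->
  sylv_ncols (derivs i) (mubars i) = (m.-1 + (size P).-1)%N.
Proof. by move=> i_gt0 szP; rewrite /sylv_ncols delta0_derivs. Qed.

Lemma sylv_derivs_dims i : (1 <= i <= (size P).-1)%N ->
  let s := sylv_rows (derivs i) (mubars i) in
  let q := sylv_ncols (derivs i) (mubars i) in
  [/\ (0 < size s <= q)%N, all (fun f : {poly K} => size f <= q)%N s
    & size (trunc_prod i) = (q - size s).+1].
Proof.
case/andP=> i_gt0 i_le; have szP : (2 <= size P)%N by lia.
have m_pos := nroots_gt0 szP.
rewrite /= sylv_rows_derivs // sylv_ncols_derivs // size_deriv_rows size_trunc_prod.
have S_ge : (m <= \sum_(k <- iota 1 i) mubar mu k)%N.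
  by case: i i_gt0 {i_le} => // i _; rewrite /= big_cons mubar1 // leq_addr.
have := sum_mubar_iota mu i; rewrite -[X in _ = X]succnK -size_factored_poly.
move: S_ge; move: (\sum_(k <- iota 1 i) _)%N (\sum_j _)%N => S T S_ge ST.
split; [|exact: deriv_rows_size_le|]; rewrite -?ST; lia.
Qed.

Lemma dvdp_subres_derivs i D : (1 <= i <= (size P).-1)%N ->
  (forall k, (k <= i)%N -> D %| P^`(k)) -> D %| subres (derivs i) (mubars i).
Proof.
move=> hi hD; have [dims rows_size _] := sylv_derivs_dims hi.
case/andP: hi => i_gt0 i_le; rewrite subresE; apply: dvdp_detpoly_coefmx => //.
by rewrite sylv_rows_derivs; [exact: deriv_rows_dvdp | | lia].
Qed.

Lemma subres_derivs_eqp i : (1 <= i <= (size P).-1)%N ->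
  subres (derivs i) (mubars i) %= trunc_prod i.
Proof.
move=> hi; have [dims rows_size sz_trunc] := sylv_derivs_dims hi.
case/andP: hi => i_gt0 i_le; rewrite subresE; apply: detpoly_coefmx_eqp => //.
  by rewrite sylv_rows_derivs; [exact: free_deriv_rows | | lia].
rewrite sylv_rows_derivs; [|done|lia].
by apply: deriv_rows_dvdp => k; exact: trunc_prod_dvdp_derivn.
Qed.

Lemma big_gcdp_derivs_eqp i : (1 <= i <= (size P).-1)%N ->
  \big[@gcdp K/0]_(k < i.+1) P^`(k) %= trunc_prod i.
Proof.
move=> hi; rewrite /eqp dvdp_big_gcdp ?andbT => [|k hk]; last first.
  exact: trunc_prod_dvdp_derivn.
rewrite -(eqp_dvdr _ (subres_derivs_eqp hi)); apply: dvdp_subres_derivs => // k hk.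
exact: big_gcdp_dvdp.
Qed.

End DerivativeRows.

Section MapSubres.
Variables (F : fieldType) (L : idomainType) (f : {rmorphism F -> L}).
Local Notation g := (map_poly f).

Lemma pdeg_map (p : {poly F}) : pdeg (g p) = pdeg p.
Proof. by rewrite /pdeg size_map_poly. Qed.

Lemma delta0_map (Fs : seq {poly F}) dl : delta0 (map g Fs) dl = delta0 Fs dl.
Proof.
have vals_map (Gs : seq {poly F}) ds :
    [seq (pdeg fd.1 + fd.2)%N | fd <- zip (map g Gs) ds & fd.2 != 0%N]
    = [seq (pdeg fd.1 + fd.2)%N | fd <- zip Gs ds & fd.2 != 0%N].
  elim: Gs ds => [|p Gs IH] [|d ds] //=.
  by case: (d != 0%N) => /=; rewrite IH // pdeg_map.
rewrite /delta0; case: Fs => [|F0 Fs] /=; first by case: dl.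
by rewrite vals_map pdeg_map.
Qed.

Lemma sylv_rows_map (Fs : seq {poly F}) dl :
  sylv_rows (map g Fs) dl = map g (sylv_rows Fs dl).
Proof.
rewrite !sylv_rowsE delta0_map; elim: Fs (_ :: dl) => [|p Fs IH] [|d ds] //=.
rewrite map_cat IH -map_comp; congr (_ ++ _); apply: eq_map => e /=.
by rewrite rmorphM /= map_polyXn.
Qed.

Lemma sylv_ncols_map (Fs : seq {poly F}) dl :
  sylv_ncols (map g Fs) dl = sylv_ncols Fs dl.
Proof.
rewrite /sylv_ncols delta0_map.
by case: Fs => [|p Fs] /=; rewrite ?pdeg_map // /pdeg !size_poly0.
Qed.

Lemma detpoly_map p q (M : 'M[F]_(p, q)) : g (detpoly M) = detpoly (map_mx f M).
Proof.
rewrite /detpoly rmorph_sum; apply: eq_bigr => i _.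
rewrite /= map_polyZ map_polyXn -det_map_mx; congr (\det _ *: _).
apply/matrixP => a b; rewrite !mxE /mxentry.
by case: insubP => [j _ _|_]; rewrite ?mxE ?rmorph0.
Qed.

Lemma detpoly_coefmx_map q (s : seq {poly F}) :
  g (detpoly (coefmx q s)) = detpoly (coefmx q (map g s)).
Proof.
rewrite detpoly_map; apply: (@detpoly_cast _ _ _ _ _ _ (esym (size_map g s))) => a j.
by rewrite !mxE /= (nth_map 0) ?coef_map.
Qed.

Lemma subres_map (Fs : seq {poly F}) dl : g (subres Fs dl) = subres (map g Fs) dl.
Proof. by rewrite !subresE sylv_rows_map sylv_ncols_map detpoly_coefmx_map. Qed.

End MapSubres.

Lemma eqp_scale_exists (K : fieldType) (p q : {poly K}) :
  q != 0 -> p %= q -> exists2 c, c != 0 & p = c *: q.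
Proof.
move=> q_neq0 pq; have p_neq0 : p != 0.
  by apply: contraNneq q_neq0 => p0; rewrite -eqp0 eqp_sym -p0.
exists (lead_coef p / lead_coef q); first by rewrite mulf_neq0 ?invr_eq0 ?lead_coef_eq0.
apply: (@scalerI _ _ (lead_coef q)); first by rewrite lead_coef_eq0.
by rewrite eqp_eq // scalerA mulrCA divff ?mulr1 ?lead_coef_eq0.
Qed.

Theorem mainTheorem1 (R : rcfType) (P : {poly R}) (m : nat)
    (r : 'I_m -> R[i]) (mu : 'I_m -> nat) :
  (2 <= pdeg P)%N ->
  injective r ->
  (forall j, 0 < mu j)%N ->
  (forall j k : 'I_m, (j <= k)%N -> (mu k <= mu j)%N) ->
  map_poly (real_complex R) P
    = (lead_coef P)%:C%C *: \prod_(j < m) ('X - (r j)%:P) ^+ mu j ->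
  forall i : nat, (1 <= i <= pdeg P)%N ->
    let Ri := subres [seq P^`(k) | k <- iota 0 i.+1] [seq mubar mu k | k <- iota 1 i] in
    let Gi := \big[@gcdp R/0]_(k < i.+1) P^`(k) in
    (exists2 c : R[i], c != 0 &
       map_poly (real_complex R) Ri
         = c *: \prod_(j < m | (i < mu j)%N) ('X - (r j)%:P) ^+ (mu j - i))
    /\ (exists2 c : R, c != 0 & Ri = c *: Gi).
Proof.
move=> degP r_inj mu_gt0 _ P_factor i hi Ri Gi.
set g := map_poly (real_complex R).
have lc_neq0 : (lead_coef P)%:C%C != 0 :> R[i].
  rewrite (fmorph_eq0 (real_complex R)) lead_coef_eq0 -size_poly_gt0.
  by move: degP; rewrite /pdeg; case: (size P).
have hi' : (1 <= i <= (size (g P)).-1)%N by rewrite size_map_poly.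
have gRi : g Ri %= trunc_prod r mu i.
  rewrite /g /Ri subres_map -map_comp; under eq_map do rewrite /= -derivn_map.
  exact: (subres_derivs_eqp r_inj lc_neq0 P_factor mu_gt0 hi').
have gGi : g Gi %= trunc_prod r mu i.
  rewrite /g /Gi (big_morph _ (gcdp_map _) (map_poly0 _)).
  under eq_bigr do rewrite -derivn_map.
  exact: (big_gcdp_derivs_eqp r_inj lc_neq0 P_factor mu_gt0 hi').
have trunc_neq0 : trunc_prod r mu i != 0 by rewrite -size_poly_gt0 size_trunc_prod.
have Gi_neq0 : Gi != 0.
  by apply: contraTneq gGi => ->; rewrite /g map_poly0 eqp_sym eqp0.
split; first exact: eqp_scale_exists.
apply: eqp_scale_exists => //.
by rewrite -(eqp_map (real_complex R)) (eqp_trans gRi) // eqp_sym.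
Qed.
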